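(* Fix $\alpha\in(0,1/2)$ and $q_1,q_3\in(0,1)$. Define $m^*(3/4,3/4)=16\alpha$, $m^*(3/4,1/4)=m^*(1/4,3/4)=\frac{8(1-2\alpha)}{3}$, $m^*(1/4,1/4)=\frac{16\alpha}{9}$, $m^*=\frac{16(4\alpha+3)}{9}$, $\overline{q}^*=\frac{8\alpha+3}{8\alpha+6}$, $$\overline{q}=\frac{1}{m^*}\Big[\big(m^*(\tfrac34,\tfrac34)+m^*(\tfrac34,\tfrac14)\big)q_3+\big(m^*(\tfrac14,\tfrac34)+m^*(\tfrac14,\tfrac14)\big)q_1\Big],$$ and the treatment's steady-state ARQ $$Q=\dfrac{q_3\frac{2(4\alpha+1)}{3(1-q_3)}+q_1\frac{2(3-4\alpha)}{3(1-q_1)}}{\frac{2(4\alpha+1)}{3(1-q_3)}+\frac{2(3-4\alpha)}{3(1-q_1)}}.$$ If $(12\alpha+3)q_3+(3-4\alpha)q_1>8\alpha+3$ and $\frac{4\alpha+1}{1-q_3}+\frac{3-4\alpha}{1-q_1}<\frac{8(4\alpha+3)}{3}$, then $\overline{q}>\overline{q}^*$ but $Q<\overline{q}^*$.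
   Context: Model: user types $(x,e)\in\{1/4,3/4\}^2$ with per-period inflow masses $\alpha$ for $(3/4,3/4)$ and $(1/4,1/4)$ and $1/2-\alpha$ for $(3/4,1/4)$ and $(1/4,3/4)$; an algorithm gives quality $q(x)\in(0,1)$ to segment $x$ and a type-$(x,e)$ user churns each period with probability $(1-q(x))(1-e)$. $m^*(x,e)$ is the status quo ($q^*(x)=x$) steady-state mass, $\overline{q}^*$ the status quo ARQ, $\overline{q}$ the ARQ observed in a one-period experiment of the treatment ($q(1/4)=q_1$, $q(3/4)=q_3$) on the status quo population, and $Q$ the ARQ of the treatment at its own steady state. *)

From Stdlib Require Import Reals.
Open Scope R_scope.

Definition m33 (a : R) : R := 16 * a.
Definition m31 (a : R) : R := 8 * (1 - 2 * a) / 3.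
Definition m13 (a : R) : R := 8 * (1 - 2 * a) / 3.
Definition m11 (a : R) : R := 16 * a / 9.
Definition mstar (a : R) : R := 16 * (4 * a + 3) / 9.

Definition qbar_star (a : R) : R := (8 * a + 3) / (8 * a + 6).

(* ARQ observed in the one-period experiment. *)
Definition qbar (a q1 q3 : R) : R :=
  / mstar a * ((m33 a + m31 a) * q3 + (m13 a + m11 a) * q1).

Definition Qss (a q1 q3 : R) : R :=
  (q3 * (2 * (4 * a + 1) / (3 * (1 - q3))) + q1 * (2 * (3 - 4 * a) / (3 * (1 - q1))))
  / (2 * (4 * a + 1) / (3 * (1 - q3)) + 2 * (3 - 4 * a) / (3 * (1 - q1))).

(* In any steady state the churn outflow equals the inflow, so the
   "unreliability mass" sum_(x,e) m(x,e) (1 - q(x)) equals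
   sum_(x,e) inflow(x,e) / (1 - e) = 8/3 whatever the qualities are.  Hence the
   steady-state ARQ is 1 - (8/3) / (total mass), and a treatment whose steady
   state carries less mass than the status quo has a lower ARQ, even though on
   the status quo population (one-period experiment) it looks better. *)

From Stdlib Require Import Reals Lra.
Open Scope R_scope.

(* Segment x carries sum_e inflow(x,e) / ((1 - q x)(1 - e)); this is the
   denominator of [Qss]. *)
Definition treatment_mass (a q1 q3 : R) : R :=
  2 * (4 * a + 1) / (3 * (1 - q3)) + 2 * (3 - 4 * a) / (3 * (1 - q1)).

Lemma treatment_mass_eq (a q1 q3 : R) : q1 <> 1 -> q3 <> 1 ->
  treatment_mass a q1 q3 = 2 / 3 * ((4 * a + 1) / (1 - q3) + (3 - 4 * a) / (1 - q1)).
Proof.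
  intros Hq1 Hq3; unfold treatment_mass; field; split; lra.
Qed.

Lemma treatment_mass_gt0 (a q1 q3 : R) :
  -1/4 < a < 3/4 -> q1 < 1 -> q3 < 1 -> 0 < treatment_mass a q1 q3.
Proof.
  intros Ha Hq1 Hq3; unfold treatment_mass.
  apply Rplus_lt_0_compat; apply Rdiv_lt_0_compat; lra.
Qed.

Lemma Qss_eq_mass (a q1 q3 : R) :
  q1 <> 1 -> q3 <> 1 -> treatment_mass a q1 q3 <> 0 ->
  Qss a q1 q3 = 1 - 8 / (3 * treatment_mass a q1 q3).
Proof.
  intros Hq1 Hq3 HM.
  assert (Hretained :
    q3 * (2 * (4 * a + 1) / (3 * (1 - q3))) + q1 * (2 * (3 - 4 * a) / (3 * (1 - q1)))
    = treatment_mass a q1 q3 - 8 / 3).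
  { unfold treatment_mass; field; split; lra. }
  unfold Qss; fold (treatment_mass a q1 q3); rewrite Hretained.
  field; exact HM.
Qed.

Lemma qbar_star_eq_mass (a : R) : 4 * a + 3 <> 0 ->
  qbar_star a = 1 - 8 / (3 * mstar a).
Proof.
  intros Ha; unfold qbar_star, mstar; field; split; lra.
Qed.

Lemma qbar_eq (a q1 q3 : R) : 4 * a + 3 <> 0 ->
  qbar a q1 q3 = ((12 * a + 3) * q3 + (3 - 4 * a) * q1) / (8 * a + 6).
Proof.
  intros Ha; unfold qbar, mstar, m33, m31, m13, m11; field; lra.
Qed.

Lemma one_sub_div_lt (c M M' : R) :
  0 < c -> 0 < M -> M < M' -> 1 - c / M < 1 - c / M'.
Proof.
  intros Hc HM HMM'; unfold Rdiv.
  assert (/ M' < / M) by (apply Rinv_0_lt_contravar; assumption).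
  apply Rplus_lt_compat_l, Ropp_lt_contravar, Rmult_lt_compat_l; assumption.
Qed.

Theorem lemma2 (a q1 q3 : R) :
  0 < a < 1/2 -> 0 < q1 < 1 -> 0 < q3 < 1 ->
  (12 * a + 3) * q3 + (3 - 4 * a) * q1 > 8 * a + 3 ->
  (4 * a + 1) / (1 - q3) + (3 - 4 * a) / (1 - q1) < 8 * (4 * a + 3) / 3 ->
  qbar a q1 q3 > qbar_star a /\ Qss a q1 q3 < qbar_star a.
Proof.
  intros Ha Hq1 Hq3 Hexperiment Hmass.
  assert (Ha3 : 4 * a + 3 <> 0) by lra.
  split.
  - rewrite qbar_eq by exact Ha3.
    unfold qbar_star, Rdiv.
    apply Rmult_lt_compat_r; [apply Rinv_0_lt_compat; lra | exact Hexperiment].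
  - assert (HM : 0 < treatment_mass a q1 q3) by (apply treatment_mass_gt0; lra).
    assert (HMlt : 3 * treatment_mass a q1 q3 < 3 * mstar a).
    { rewrite treatment_mass_eq by lra; unfold mstar; lra. }
    rewrite Qss_eq_mass, qbar_star_eq_mass by lra.
    apply one_sub_div_lt; lra.
Qed.
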